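(* Let $n\ge 2$ be an integer and $\alpha>1$. There exists a weighted graph $G=(\{0,\dots,n-1\},w)$ with $\mathrm{cdim}_\alpha(G)=\binom n2$.
   Context: A weighted graph $G=(V,w)$ assigns a nonnegative weight to each unordered pair of distinct vertices; its edge set is $E=\{e:w(e)>0\}$. For $\emptyset\ne X\subsetneq V$, $\Delta(X)$ is the set of edges with exactly one endpoint in $X$, of weight $w(\Delta(X))$ equal to the sum of their weights; $\lambda$ is the minimum cut weight. For $\alpha\ge1$, an $\alpha$-near-mincut is a cut of weight at most $\alpha\lambda$, $\mathcal{M}_\alpha(G)$ is the set of these, $\chi(S)\in\{0,1\}^{|E|}$ is the characteristic vector of $S$ indexed by $E$, and $\mathrm{cdim}_\alpha(G)=\dim\,\mathrm{span}\{\chi(S):S\in\mathcal{M}_\alpha(G)\}$. *)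

From HB Require Import structures.
From mathcomp Require Import all_boot all_order all_algebra.
From mathcomp Require Import reals.
Set Implicit Arguments. Unset Strict Implicit. Unset Printing Implicit Defensive.
Import Order.TTheory GRing.Theory Num.Theory.
Local Open Scope ring_scope.

Section CutDim.
Variables (R : realType) (n : nat) (w : 'I_n -> 'I_n -> R).

(* A weighted graph on V = 'I_n is a symmetric nonnegative weight function;
   unordered pair {i,j} is represented by (i,j) with i < j. *)
Definition is_weighted_graph : Prop :=
  (forall i j, w i j = w j i) /\ (forall i j, 0 <= w i j).

Definition edges : {set 'I_n * 'I_n} :=
  [set e : 'I_n * 'I_n | (e.1 < e.2)%N && (0 < w e.1 e.2)].

Definition cut (X : {set 'I_n}) : {set 'I_n * 'I_n} :=
  [set e in edges | (e.1 \in X) != (e.2 \in X)].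

Definition cut_weight (X : {set 'I_n}) : R := \sum_(e in cut X) w e.1 e.2.

Definition proper_nonempty (X : {set 'I_n}) : bool := (X != set0) && (X != setT).

(* lambda = minimum cut weight over nonempty proper X; the default value
   (total edge weight) is an upper bound of all cut weights. *)
Definition mincut : R :=
  \big[Num.min/(\sum_(e in edges) w e.1 e.2)]_(X | proper_nonempty X) cut_weight X.

Definition near_mincut (alpha : R) (X : {set 'I_n}) : bool :=
  proper_nonempty X && (cut_weight X <= alpha * mincut).

Definition chi (X : {set 'I_n}) : 'rV[R]_#|edges| :=
  \row_(k < #|edges|) (if enum_val k \in cut X then 1 else 0).

Definition cdim (alpha : R) : nat :=
  \rank (\sum_(X | near_mincut alpha X) <<chi X>>)%MS.

End CutDim.

From mathcomp Require Import all_boot all_order all_algebra.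
From mathcomp Require Import reals.
From mathcomp Require Import zify lra.
Import Order.TTheory GRing.Theory Num.Theory.
Set Implicit Arguments. Unset Strict Implicit. Unset Printing Implicit Defensive.
Local Open Scope ring_scope.

(* The witness graph on V = {0, ..., n-1} is the n-cycle (weight 1 on the
   pairs {i, i+1 mod n}) plus a small weight eps > 0 on every pair.
   - Every pair carries positive weight, so E is the set of all C(n,2) pairs
     and the cut weight of X is eps*|X|*|V\X| plus the number of cycle edges
     leaving X or entering X.
   - A nonempty proper X is left and entered by at least one cycle edge, so
     lambda >= 2; a cyclic interval is left and entered by at most one, so its
     cut weight is at most eps*n^2 + 2.  Choosing eps*n^2 = alpha - 1 makes
     every interval cut an alpha-near-mincut (alpha + 1 <= 2 alpha).
   - The characteristic vector of a single pair {x,y} (x < y) is an explicit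
     combination of the cuts of the intervals [x+1,y], [x,y-1], [x,y] and
     [x+1,y-1], so the near-mincut vectors span the whole space R^E and
     cdim_alpha = |E| = C(n,2). *)

Section Cuts.
Variables (R : realType) (n : nat) (w : 'I_n -> 'I_n -> R).

Lemma mem_cut (X : {set 'I_n}) (e : 'I_n * 'I_n) : e \in edges w ->
  (e \in cut w X) = ((e.1 \in X) != (e.2 \in X)).
Proof. by move=> e_edge; rewrite /cut inE e_edge. Qed.

(* Any cut weighs at most the total weight: the default value of [mincut]
   is therefore harmless. *)
Lemma cut_weight_le_total (X : {set 'I_n}) : (forall i j, 0 <= w i j) ->
  cut_weight w X <= \sum_(e in edges w) w e.1 e.2.
Proof.
move=> w_ge0; rewrite [X in _ <= X](big_setID (cut w X)) /=.
have /setIidPr -> : cut w X \subset edges w by apply/subsetP => e; rewrite inE => /andP[].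
by rewrite /cut_weight lerDl; apply: sumr_ge0 => e _.
Qed.

Lemma mincut_ge (c : R) (X0 : {set 'I_n}) : (forall i j, 0 <= w i j) ->
  proper_nonempty X0 ->
  (forall X, proper_nonempty X -> c <= cut_weight w X) -> c <= mincut w.
Proof.
move=> w_ge0 X0_proper c_le; rewrite /mincut.
apply: (big_ind (fun x => c <= x)) => [|x y cx cy|//].
- exact: le_trans (c_le _ X0_proper) (cut_weight_le_total _ w_ge0).
- by rewrite le_min cx cy.
Qed.

Lemma cut_weight_double_sum (X : {set 'I_n}) :
  (forall i j, 0 < w i j) -> (forall i j, w i j = w j i) ->
  cut_weight w X = \sum_(i in X) \sum_(j in ~: X) w i j.
Proof.
move=> w_gt0 w_sym; rewrite pair_big /= /cut_weight /cut /edges !big_mkcond /=.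
transitivity (\sum_(e : 'I_n * 'I_n)
   ((if (e.1 < e.2)%N && (e.1 \in X) && (e.2 \notin X) then w e.1 e.2 else 0)
  + (if (e.1 < e.2)%N && (e.2 \in X) && (e.1 \notin X) then w e.2 e.1 else 0))).
  apply: eq_bigr => [[x y]] _ /=; rewrite !inE /= w_gt0 (w_sym y x) andbT.
  by case: (x < y)%N; case: (x \in X); case: (y \in X); rewrite /= ?addr0 ?add0r.
have swap_inj : injective (fun p : 'I_n * 'I_n => (p.2, p.1)).
  by move=> [a b] [c d] /= [-> ->].
rewrite big_split /= [X in _ + X = _](reindex_inj swap_inj) -big_split /=.
rewrite [RHS]big_mkcond; apply: eq_bigr => [[x y]] _ /=; rewrite !inE.
case: (ltngtP x y) => [_|_|/val_inj ->];
  by case: (x \in X); case: (y \in X); rewrite /= ?andbF ?addr0 ?add0r.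
Qed.

Lemma chi_trivial (X : {set 'I_n}) : ~~ proper_nonempty X -> chi w X = 0.
Proof.
rewrite negb_and !negbK => X_triv; apply/rowP => k; rewrite !mxE /cut inE.
by case/orP: X_triv => /eqP ->; rewrite !inE ?andbF.
Qed.

Lemma cdim_full (alpha : R) :
  (forall k, (('e_k : 'rV_#|edges w|)
               <= \sum_(X | near_mincut w alpha X) <<chi w X>>)%MS) ->
  cdim w alpha = #|edges w|.
Proof.
move=> span_unit; apply/eqP; rewrite -/(row_full _) -sub1mx.
by apply/row_subP => k; rewrite row1.
Qed.

End Cuts.

Section Cycle.
Variable n : nat.

Definition leaving (X : {set 'I_n}) : {set 'I_n} := [set i in X | @ordS n i \notin X].

Definition interval (a b : nat) : {set 'I_n} := [set k : 'I_n | (a <= k <= b)%N].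

Lemma val_iter_ordS (i : 'I_n) (k : nat) : val (iter k (@ordS n) i) = ((i + k) %% n)%N.
Proof.
elim: k => [|k IHk] /=; first by rewrite addn0 modn_small.
by rewrite IHk addnS -addn1 modnDml addn1.
Qed.

Lemma val_ordS (i : 'I_n) : val (@ordS n i) = (if (i.+1 < n)%N then i.+1 else 0%N).
Proof.
rewrite /=; case: ltnP => [/modn_small -> //|le_n_Si].
have -> : i.+1 = n by have := ltn_ord i; lia.
by rewrite modnn.
Qed.

Lemma ordS_closed_full (X : {set 'I_n}) (i0 : 'I_n) : i0 \in X ->
  (forall i, i \in X -> @ordS n i \in X) -> X = setT.
Proof.
move=> i0X X_closed; apply/setP => j; rewrite inE.
have iter_in k : iter k (@ordS n) i0 \in X by elim: k => //= k; apply: X_closed.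
suff -> : j = iter (j + n - i0)%N (@ordS n) i0 by exact: iter_in.
apply: val_inj; rewrite val_iter_ordS.
have -> : (i0 + (j + n - i0) = j + n)%N by have := ltn_ord i0; lia.
by rewrite modnDr modn_small.
Qed.

Lemma leaving_proper (X : {set 'I_n}) : proper_nonempty X -> (0 < #|leaving X|)%N.
Proof.
case/andP=> /set0Pn[i0 i0X] X_not_full; rewrite card_gt0.
apply: contra X_not_full => /eqP leaving0; apply/eqP/(ordS_closed_full i0X) => i iX.
apply: contraT => Si_out.
have : i \in leaving X by rewrite inE iX.
by rewrite leaving0 inE.
Qed.

Lemma proper_setC (X : {set 'I_n}) : proper_nonempty X -> proper_nonempty (~: X).
Proof.
case/andP=> X0 XT; apply/andP; split.
- by apply: contra XT => /eqP/(congr1 (@setC _)); rewrite setCK setC0 => ->.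
- by apply: contra X0 => /eqP/(congr1 (@setC _)); rewrite setCK setCT => ->.
Qed.

Lemma leaving_interval (a b : nat) : (#|leaving (interval a b)| <= 1)%N.
Proof.
apply/card_le1_eqP => i j; rewrite !inE => /andP[iI iS] /andP[jI jS]; apply/val_inj.
move: iS jS; rewrite !val_ordS; have := ltn_ord i; have := ltn_ord j.
by case: ifP; case: ifP => /= Sj_lt_n Si_lt_n j_lt_n i_lt_n iS jS; lia.
Qed.

Lemma entering_interval (a b : nat) : (#|leaving (~: interval a b)| <= 1)%N.
Proof.
apply/card_le1_eqP => i j; rewrite !inE negbK => /andP[iI iS] /andP[jI jS].
apply/val_inj; move: iS jS; rewrite !val_ordS; have := ltn_ord i; have := ltn_ord j.
by case: ifP; case: ifP => /= Sj_lt_n Si_lt_n j_lt_n i_lt_n iS jS; lia.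
Qed.

End Cycle.

Lemma card_ordered_pairs (n : nat) :
  #|[set e : 'I_n * 'I_n | (e.1 < e.2)%N]| = 'C(n, 2).
Proof.
rewrite -sum1_card big_mkcond /=.
rewrite (eq_bigr (fun e : 'I_n * 'I_n => ((e.1 < e.2)%N : nat))); last first.
  by move=> e _; rewrite inE; case: (_ < _)%N.
rewrite -(pair_bigA _ (fun i j : 'I_n => ((i < j)%N : nat))) /= exchange_big /=.
rewrite (eq_bigr (fun j : 'I_n => val j)); last first.
  move=> j _; rewrite -(big_mkord xpredT (fun i => ((i < j)%N : nat))).
  rewrite (big_cat_nat (leq0n j) (ltnW (ltn_ord j))) /=.
  rewrite (@eq_big_nat _ _ _ 0 j _ (fun _ => 1%N)); last by move=> i /andP[_ ->].
  rewrite (@eq_big_nat _ _ _ j n _ (fun _ => 0%N)); last first.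
    by move=> i /andP[j_le_i _]; rewrite ltnNge j_le_i.
  by rewrite !sum_nat_const_nat muln0 muln1 addn0 subn0.
by rewrite -(big_mkord xpredT (fun j => j)) bin2_sum.
Qed.

Lemma sum_indicator (R : pzSemiRingType) (T : finType) (A : {pred T}) (P : pred T) :
  \sum_(i in A) (P i : nat)%:R = #|[set i in A | P i]|%:R :> R.
Proof. by rewrite -natr_sum -sum1dep_card big_mkcondr. Qed.

Lemma sum_delta (R : pzSemiRingType) (T : finType) (A : {pred T}) (c : T) :
  \sum_(j in A) (c == j : nat)%:R = (c \in A : nat)%:R :> R.
Proof.
rewrite big_mkcond (bigD1 c) //= eqxx big1 ?addr0 => [|j /negbTE]; first by case: (c \in A).
by rewrite eq_sym => ->; case: (j \in A).
Qed.

(* Which of the four intervals [x+1,y], [x,y-1], [x,y], [x+1,y-1] separate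
   the endpoints of a pair u < v: the first two do so twice more in total than
   the last two exactly when {u,v} = {x,y}. *)
Lemma interval_separation_count (u v x y : nat) : (u < v)%N -> (x < y)%N ->
  (((x.+1 <= u <= y) != (x.+1 <= v <= y)) + ((x <= u <= y.-1) != (x <= v <= y.-1))
  = ((x <= u <= y) != (x <= v <= y)) + ((x.+1 <= u <= y.-1) != (x.+1 <= v <= y.-1))
    + 2 * ((u == x) && (v == y)))%N.
Proof. by move=> u_lt_v x_lt_y; lia. Qed.

Section CycleWeight.
Variables (R : realType) (n : nat) (eps : R).
Hypothesis eps_gt0 : 0 < eps.

Definition cycle_weight (i j : 'I_n) : R :=
  eps + ((@ordS n i == j) + (@ordS n j == i))%N%:R.

Lemma cycle_weight_sym (i j : 'I_n) : cycle_weight i j = cycle_weight j i.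
Proof. by rewrite /cycle_weight addnC. Qed.

Lemma cycle_weight_gt0 (i j : 'I_n) : 0 < cycle_weight i j.
Proof. by rewrite /cycle_weight ltr_wpDr // ler0n. Qed.

Lemma cycle_weight_graph : is_weighted_graph cycle_weight.
Proof. by split => i j; [exact: cycle_weight_sym | exact/ltW/cycle_weight_gt0]. Qed.

Lemma edges_cycle_weight : edges cycle_weight = [set e : 'I_n * 'I_n | (e.1 < e.2)%N].
Proof. by apply/setP => e; rewrite !inE cycle_weight_gt0 andbT. Qed.

Lemma cut_weight_cycle (X : {set 'I_n}) :
  cut_weight cycle_weight X =
  eps *+ (#|~: X| * #|X|) + (#|leaving X| + #|leaving (~: X)|)%:R.
Proof.
rewrite (cut_weight_double_sum _ cycle_weight_gt0 cycle_weight_sym) /cycle_weight.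
under eq_bigr => i _ do under eq_bigr => j _ do rewrite natrD addrA.
under eq_bigr => i _ do rewrite !big_split /= sumr_const sum_delta.
rewrite !big_split /= sumr_const -mulrnA exchange_big /= -addrA natrD.
congr (_ + (_ + _)); rewrite -sum_indicator; apply: eq_bigr => i _.
- by rewrite inE.
- by rewrite sum_delta !inE negbK.
Qed.

(* A proper cut crosses the cycle at least twice. *)
Lemma cut_weight_cycle_ge2 (X : {set 'I_n}) :
  proper_nonempty X -> 2 <= cut_weight cycle_weight X.
Proof.
move=> X_proper; rewrite cut_weight_cycle.
have crossings : (2 <= #|leaving X| + #|leaving (~: X)|)%N.
  by have := leaving_proper X_proper; have := leaving_proper (proper_setC X_proper); lia.
have eps_term : 0 <= eps *+ (#|~: X| * #|X|) by rewrite mulrn_wge0 // ltW.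
rewrite -(ler_nat R) in crossings; lra.
Qed.

(* Hence lambda >= 2, witnessed on the proper set {0} for the default value. *)
Lemma mincut_cycle_ge2 : (2 <= n)%N -> 2 <= mincut cycle_weight.
Proof.
move=> n_ge2; apply: (@mincut_ge _ _ _ _ (interval n 0 0)).
- by move=> i j; exact/ltW/cycle_weight_gt0.
- apply/andP; split.
  + by apply/set0Pn; exists (Ordinal (ltn_trans (ltnSn 0) n_ge2)); rewrite inE.
  + apply/negP => /eqP full.
    by have := in_setT (Ordinal n_ge2); rewrite -full inE.
- exact: cut_weight_cycle_ge2.
Qed.

(* A cyclic interval crosses the cycle at most twice. *)
Lemma cut_weight_interval_le (a b : nat) :
  cut_weight cycle_weight (interval n a b) <= eps *+ (n * n) + 2.
Proof.
rewrite cut_weight_cycle lerD //.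
- apply: ler_wpMn2l; first exact: ltW.
  by apply: leq_mul; apply: leq_trans (max_card _) _; rewrite card_ord.
- have := leaving_interval n a b; have := entering_interval n a b.
  by rewrite ler_nat; lia.
Qed.

Lemma unit_vector_interval_cuts (k : 'I_#|edges cycle_weight|) (x y : 'I_n) :
  enum_val k = (x, y) ->
  'e_k = 2^-1 *: (chi cycle_weight (interval n x.+1 y)
                  + chi cycle_weight (interval n x y.-1)
                  - (chi cycle_weight (interval n x y)
                     + chi cycle_weight (interval n x.+1 y.-1))).
Proof.
move=> k_xy.
have ordered (m : 'I_#|edges cycle_weight|) (u v : 'I_n) :
    enum_val m = (u, v) -> (u < v)%N.
  by move=> m_uv; have := enum_valP m; rewrite m_uv edges_cycle_weight inE.
apply/rowP => m; rewrite !mxE !(mem_cut _ (enum_valP m)).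
have x_lt_y := ordered _ _ _ k_xy.
case m_uv: (enum_val m) => [u v]; have u_lt_v := ordered _ _ _ m_uv.
have -> : (m == k) = (u == x) && (v == y).
  by rewrite -(inj_eq enum_val_inj) m_uv k_xy xpair_eqE.
have bool_natr (b : bool) : (if b then 1 else 0) = b%:R :> R by case: b.
rewrite !inE /= !bool_natr -!val_eqE /=.
have := congr1 (fun t : nat => t%:R : R) (interval_separation_count u_lt_v x_lt_y).
by rewrite !natrD /= => count; lra.
Qed.

End CycleWeight.

Theorem mainTheorem18 (R : realType) (n : nat) (alpha : R) :
  (2 <= n)%N -> 1 < alpha ->
  exists w : 'I_n -> 'I_n -> R,
    is_weighted_graph w /\ cdim w alpha = 'C(n, 2).
Proof.
move=> n_ge2 alpha_gt1.
pose eps := (alpha - 1) / (n * n)%:R.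
have nn_gt0 : 0 < (n * n)%:R :> R by rewrite ltr0n muln_gt0; apply/andP; split; lia.
have eps_gt0 : 0 < eps by rewrite divr_gt0 ?subr_gt0.
have eps_nn : eps *+ (n * n) = alpha - 1 by rewrite -mulr_natr divfK // gt_eqF.
pose w := @cycle_weight R n eps.
exists w; split; first exact: cycle_weight_graph.
rewrite -card_ordered_pairs -(edges_cycle_weight n eps_gt0); apply: cdim_full => k.
set S := (\sum_(X | _) _)%MS.
(* Interval cuts are alpha-near-mincuts: eps n^2 + 2 = alpha + 1 <= 2 alpha. *)
have interval_in_S a b : (chi w (interval n a b) <= S)%MS.
  have [proper|/chi_trivial->] := boolP (proper_nonempty (interval n a b));
    last exact: sub0mx.
  apply: (sumsmx_sup (interval n a b)); last by rewrite genmxE.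
  have := cut_weight_interval_le n eps_gt0 a b; rewrite eps_nn => cut_le.
  have := ler_wpM2l (ltW (lt_trans ltr01 alpha_gt1)) (mincut_cycle_ge2 eps_gt0 n_ge2).
  by rewrite /near_mincut proper /= => mincut_ge; lra.
case k_xy: (enum_val k) => [x y]; rewrite (unit_vector_interval_cuts eps_gt0 k_xy).
by rewrite scalemx_sub // addmx_sub ?eqmx_opp // addmx_sub.
Qed.
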